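(* The discrete self-adjoint Dirac system $y_{k+1}(z)=(I_m+\mathrm{i} z j C_k)y_k(z)$ $(k\in\mathbb{N}_0)$, whose potential satisfies $C_k>0$, $C_k j C_k=j$, is uniquely recovered (i.e., the sequence $\{C_k\}$ is uniquely determined) from its Weyl function $\varphi(z)$, $z\in\mathbb{C}_-$.
   Context: Let $j=\mathrm{diag}\{I_{m_1},-I_{m_2}\}$ with $m_1+m_2=m$, $m_1,m_2\neq 0$. Consider the discrete self-adjoint Dirac system $y_{k+1}(z)=(I_m+\mathrm{i} z j C_k)y_k(z)$, $k\in\mathbb{N}_0$, where the $m\times m$ matrices $C_k$ satisfy $C_k>0$ and $C_k j C_k=j$. Let $\{W_k(z)\}$ be its fundamental solution normalized by $W_0(z)=I_m$, and let $q(z)=(1+|z|^2)^{-1}$. The Weyl function of the system is the $m_1\times m_2$ matrix function $\varphi(z)$ on the lower half-plane $\mathbb{C}_-$ such that $\sum_{k=0}^\infty q(z)^k \begin{bmatrix}\varphi(z)^* & I_{m_2}\end{bmatrix} W_k(z)^* C_k W_k(z)\begin{bmatrix}\varphi(z)\\ I_{m_2}\end{bmatrix}<\infty$ for $z\in\mathbb{C}_-$. (Such a Weyl function exists, is unique, and is analytic and contractive on $\mathbb{C}_-$.) *)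

From HB Require Import structures.
From mathcomp Require Import all_boot all_order all_algebra.
From mathcomp Require Import complex.
From mathcomp Require Import reals.
Set Implicit Arguments. Unset Strict Implicit. Unset Printing Implicit Defensive.
Import Order.TTheory GRing.Theory Num.Theory.
Local Open Scope ring_scope.
Local Open Scope complex_scope.

Section Dirac.
Variable R : realType.
Local Notation C := R[i].

Definition adj {m n : nat} (A : 'M[C]_(m, n)) : 'M[C]_(n, m) :=
  (map_mx Num.conj A)^T.

Definition posdef {m : nat} (A : 'M[C]_m) : Prop :=
  adj A = A /\ forall v : 'cV[C]_m, v != 0 -> 0 < (adj v *m A *m v) 0 0.

Definition jmat (m1 m2 : nat) : 'M[C]_(m1 + m2) :=
  block_mx 1%:M 0 0 (- 1%:M).

Definition dirac_potential (m1 m2 : nat) (Cs : nat -> 'M[C]_(m1 + m2)) : Prop :=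
  forall k, posdef (Cs k) /\ Cs k *m jmat m1 m2 *m Cs k = jmat m1 m2.

Fixpoint fundW (m1 m2 : nat) (Cs : nat -> 'M[C]_(m1 + m2)) (z : C) (k : nat)
  : 'M[C]_(m1 + m2) :=
  match k with
  | 0 => 1%:M
  | k'.+1 => (1%:M + ('i * z) *: (jmat m1 m2 *m Cs k')) *m fundW Cs z k'
  end.

Definition qfun (z : C) : C := (1 + `|z| ^+ 2)^-1.

Definition weyl_term (m1 m2 : nat) (Cs : nat -> 'M[C]_(m1 + m2))
  (phi : 'M[C]_(m1, m2)) (z : C) (k : nat) : 'M[C]_m2 :=
  qfun z ^+ k *: (adj (col_mx phi 1%:M) *m adj (fundW Cs z k) *m Cs k
                   *m fundW Cs z k *m col_mx phi 1%:M).

(* the series of positive semidefinite matrices is finite: partial sums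
   are bounded (equivalently, their traces are bounded) *)
Definition weyl_summable (m1 m2 : nat) (Cs : nat -> 'M[C]_(m1 + m2))
  (phi : 'M[C]_(m1, m2)) (z : C) : Prop :=
  exists B : R, forall N : nat,
    \tr (\sum_(k < N) weyl_term Cs phi z k) <= B%:C.

Definition is_weyl_function (m1 m2 : nat) (Cs : nat -> 'M[C]_(m1 + m2))
  (phi : C -> 'M[C]_(m1, m2)) : Prop :=
  forall z : C, complex.Im z < 0 -> weyl_summable Cs (phi z) z.

End Dirac.

From HB Require Import structures.
From mathcomp Require Import all_boot all_order all_algebra.
From mathcomp Require Import complex.
From mathcomp Require Import reals.
From mathcomp Require Import ring lra.
Set Implicit Arguments. Unset Strict Implicit. Unset Printing Implicit Defensive.
Import Order.TTheory GRing.Theory Num.Theory.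
Local Open Scope ring_scope.
Local Open Scope complex_scope.

(** Fix z in the lower half-plane, put q = (1 + |z|^2)^-1 and, for a vector w,
    t_k = q^k (W_k w)^* j (W_k w) and s_k = q^k (W_k w)^* C_k (W_k w). For the
    transfer matrix A = I + i z j C_k one has A^* j A = (1 + |z|^2) j - 2 Im z C_k,
    so t_(k+1) = t_k + c s_k with c = -2 q Im z > 0; and t_k <= s_k since C_k >= j.
    If the s_k are summable, as they are for w in the range of [phi(z); I], all
    the t_k are therefore nonpositive: [phi(z); I] lies in every Weyl disc.
    As j C_0 is an involution, C_0 is determined by its eigenspaces
    ker (C_0 + j) and ker (C_0 - j), the graphs of the Weyl function phi_0 of the
    constant potential C_0 and of phi_0^*. The disc inequality t_1 <= 0 at
    z = -i s pushes the graph of phi(z) onto ker (C_0 + j) as s -> 1, so phi_0,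
    hence C_0, is the same for both potentials. Then A(z) [phi(z); I] lies in the
    Weyl discs of the shifted potential (C_(k+1)) and has an invertible lower
    block for z <> -i, and induction on k concludes. *)

Lemma unitmx_injective (F : fieldType) n (A : 'M[F]_n) :
  (forall x : 'cV[F]_n, A *m x = 0 -> x = 0) -> A \in unitmx.
Proof.
move=> injA; rewrite unitmxE unitfE -det_tr; apply/negP => /det0P[v v_neq0 vA0].
have /injA /eqP : A *m v^T = 0 by rewrite -[A]trmxK -trmx_mul vA0 trmx0.
by rewrite -trmx0 (inj_eq trmx_inj) (negbTE v_neq0).
Qed.

Lemma row_mx_graphs_eq0 (R : comUnitRingType) p m1 m2 (X : 'M[R]_(p, m1))
    (Y : 'M[R]_(p, m2)) (P : 'M[R]_(m1, m2)) (Q : 'M[R]_(m2, m1)) :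
  1%:M - P *m Q \in unitmx ->
  row_mx X Y *m col_mx P 1%:M = 0 -> row_mx X Y *m col_mx 1%:M Q = 0 ->
  row_mx X Y = 0.
Proof.
rewrite !mul_row_col !mulmx1 => PQ_unit XPY0 XYQ0.
have Y_def : Y = - (X *m P) by apply/eqP; rewrite -addr_eq0 addrC XPY0.
have : X *m (1%:M - P *m Q) = 0 by rewrite mulmxBr mulmx1 mulmxA -mulNmx -Y_def.
move=> /(congr1 (mulmx^~ (invmx (1%:M - P *m Q)))); rewrite mulmxK // mul0mx => X0.
by rewrite Y_def X0 mul0mx oppr0 row_mx0.
Qed.

Lemma bounded_growth_nonpos (R : archiRealFieldType) (t s : nat -> R) (c B : R) :
  0 < c -> (forall k, t k.+1 = t k + c * s k) -> (forall k, t k <= s k) ->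
  (forall N, \sum_(k < N) s k <= B) -> forall N, t N <= 0.
Proof.
move=> c_gt0 t_rec t_le_s s_bounded M; rewrite leNgt; apply/negP => tM_gt0.
have t_bounded N : t N <= t 0%N + c * B.
  have -> : t N = t 0%N + c * \sum_(k < N) s k.
    elim: N => [|N IH]; first by rewrite big_ord0 mulr0 addr0.
    by rewrite t_rec IH big_ord_recr /= mulrDr addrA.
  by rewrite lerD2l ler_wpM2l // ltW.
have t_linear k : t M + k%:R * (c * t M) <= t (M + k)%N.
  elim: k => [|k IH]; first by rewrite mul0r addr0 addn0.
  have tMk_ge : t M <= t (M + k)%N.
    by apply: le_trans IH; rewrite lerDl mulr_ge0 // ltW // mulr_gt0.
  rewrite addnS t_rec -natr1 mulrDl mul1r addrA lerD //.
  by rewrite ler_pM2l // (le_trans tMk_ge (t_le_s _)).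
pose x := (t 0%N + c * B - t M) / (c * t M).
have ctM_gt0 : 0 < c * t M by rewrite mulr_gt0.
have : x < (Num.Def.archi_bound `|x|)%:R.
  by apply: le_lt_trans (archi_boundP (normr_ge0 x)); rewrite ler_norm.
rewrite ltr_pdivrMr // => k_large.
have := le_trans (t_linear (Num.Def.archi_bound `|x|)) (t_bounded _); lra.
Qed.

Lemma nonpos_of_le_sqr_small (R : realFieldType) (N E : R) : 0 <= E ->
  (forall d, 0 < d -> N <= d ^+ 2 * E) -> N <= 0.
Proof.
move=> E_ge0 N_le; rewrite leNgt; apply/negP => N_gt0.
pose d := N / (N + E + 1).
have dNE : d * (N + E + 1) = N by rewrite /d mulfVK // gt_eqF //; lra.
have d_gt0 : 0 < d by rewrite divr_gt0 //; lra.
have d_lt1 : d < 1 by rewrite ltr_pdivrMr; lra.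
have : d ^+ 2 * E <= d * E by rewrite ler_wpM2r // expr2 ger_pMl //; exact: ltW.
have := N_le d d_gt0; nra.
Qed.

Section Adjoint.
Variable R : realType.
Local Notation C := R[i].

Lemma adjK m n (A : 'M[C]_(m, n)) : adj (adj A) = A.
Proof. by apply/matrixP=> i j; rewrite !mxE conjCK. Qed.

Lemma adj_mul m n p (A : 'M[C]_(m, n)) (B : 'M[C]_(n, p)) : adj (A *m B) = adj B *m adj A.
Proof. by rewrite /adj map_mxM trmx_mul. Qed.

Lemma adj_add m n (A B : 'M[C]_(m, n)) : adj (A + B) = adj A + adj B.
Proof. by apply/matrixP=> i j; rewrite !mxE rmorphD. Qed.

Lemma adj_opp m n (A : 'M[C]_(m, n)) : adj (- A) = - adj A.
Proof. by apply/matrixP=> i j; rewrite !mxE rmorphN. Qed.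

Lemma adj_sub m n (A B : 'M[C]_(m, n)) : adj (A - B) = adj A - adj B.
Proof. by rewrite adj_add adj_opp. Qed.

Lemma adj_mx0 m n : adj (0 : 'M[C]_(m, n)) = 0.
Proof. by apply/matrixP=> i j; rewrite !mxE rmorph0. Qed.

Lemma adj_scale m n a (A : 'M[C]_(m, n)) : adj (a *: A) = a^* *: adj A.
Proof. by apply/matrixP=> i j; rewrite !mxE rmorphM. Qed.

Lemma adj_mx1 n : adj (1%:M : 'M[C]_n) = 1%:M.
Proof. by rewrite /adj map_mx1 trmx1. Qed.

Lemma adj_col_mx m1 m2 n (A : 'M[C]_(m1, n)) (B : 'M[C]_(m2, n)) :
  adj (col_mx A B) = row_mx (adj A) (adj B).
Proof. by rewrite /adj map_col_mx tr_col_mx. Qed.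

Lemma adj_block_mx m1 m2 n1 n2 (A : 'M[C]_(m1, n1)) (B : 'M[C]_(m1, n2))
    (D : 'M[C]_(m2, n1)) (E : 'M[C]_(m2, n2)) :
  adj (block_mx A B D E) = block_mx (adj A) (adj D) (adj B) (adj E).
Proof. by rewrite /adj map_block_mx tr_block_mx. Qed.

Lemma adj_delta_mx n (i : 'I_n) : adj (delta_mx i 0 : 'cV[C]_n) = delta_mx 0 i.
Proof. by apply/matrixP=> a b; rewrite !mxE rmorph_nat andbC. Qed.

End Adjoint.

Section QuadraticForm.
Variable R : realType.
Local Notation C := R[i].

Definition qform n (M : 'M[C]_n) (x : 'cV[C]_n) : R := complex.Re ((adj x *m M *m x) 0 0).

Definition norm2 n (x : 'cV[C]_n) : R := qform 1%:M x.

Lemma complex_ext (x y : C) :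
  complex.Re x = complex.Re y -> complex.Im x = complex.Im y -> x = y.
Proof. by case: x y => a b [c d] /= -> ->. Qed.

Lemma Re_realM (r : R) (y : C) : complex.Re (r%:C * y) = r * complex.Re y.
Proof. by case: y => a b /=; ring. Qed.

Lemma conjc_mul_self (a : C) : a^* * a = (complex.Re a ^+ 2 + complex.Im a ^+ 2)%:C.
Proof. by case: a => u v; apply: complex_ext => /=; ring. Qed.

Lemma norm2E n (x : 'cV[C]_n) :
  norm2 x = \sum_i (complex.Re (x i 0) ^+ 2 + complex.Im (x i 0) ^+ 2).
Proof.
rewrite /norm2 /qform mulmx1 mxE raddf_sum; apply: eq_bigr => i _.
by rewrite !mxE conjc_mul_self.
Qed.

Lemma norm2_ge0 n (x : 'cV[C]_n) : 0 <= norm2 x.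
Proof. by rewrite norm2E sumr_ge0 // => i _; rewrite addr_ge0 ?sqr_ge0. Qed.

Lemma norm2_eq0 n (x : 'cV[C]_n) : norm2 x <= 0 -> x = 0.
Proof.
have terms_ge0 i : 0 <= complex.Re (x i 0) ^+ 2 + complex.Im (x i 0) ^+ 2.
  by rewrite addr_ge0 ?sqr_ge0.
rewrite norm2E => sum_le0; apply/matrixP=> i j; rewrite (ord1 j) mxE.
have sum0 : \sum_i (complex.Re (x i 0) ^+ 2 + complex.Im (x i 0) ^+ 2) = 0.
  by apply/eqP; rewrite eq_le sum_le0 sumr_ge0.
have /eqP := @psumr_eq0P _ _ _ _ (fun i _ => terms_ge0 i) sum0 i isT.
rewrite paddr_eq0 ?sqr_ge0 // !sqrf_eq0 => /andP[/eqP re0 /eqP im0].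
by case: (x i 0) re0 im0 => ? ? /= -> ->.
Qed.

Lemma qform_mulmx k p (M : 'M[C]_k) (A : 'M[C]_(k, p)) x :
  qform (adj A *m M *m A) x = qform M (A *m x).
Proof. by rewrite /qform adj_mul !mulmxA. Qed.

Lemma qformD k (M N : 'M[C]_k) x : qform (M + N) x = qform M x + qform N x.
Proof. by rewrite /qform mulmxDr mulmxDl mxE raddfD. Qed.

Lemma qformZ k (r : R) (M : 'M[C]_k) x : qform (r%:C *: M) x = r * qform M x.
Proof. by rewrite /qform -scalemxAr -scalemxAl mxE Re_realM. Qed.

Lemma qform0 k (M : 'M[C]_k) : qform M 0 = 0.
Proof. by rewrite /qform mulmx0 mxE. Qed.

Lemma qform_vecZ k (M : 'M[C]_k) a x :
  qform M (a *: x) = (complex.Re a ^+ 2 + complex.Im a ^+ 2) * qform M x.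
Proof.
by rewrite /qform adj_scale -!scalemxAl -!scalemxAr scalerA mxE conjc_mul_self Re_realM.
Qed.

Lemma qform_parallelogram k (M : 'M[C]_k) x y :
  qform M (x + y) + qform M (x - y) = 2 * qform M x + 2 * qform M y.
Proof.
rewrite /qform adj_add adj_sub !mulmxDl !mulmxDr !mulmxN !mulNmx.
move: (adj x *m M *m x) (adj x *m M *m y) (adj y *m M *m x) (adj y *m M *m y) => a b c d.
rewrite !mxE; case: (a 0 0) (b 0 0) (c 0 0) (d 0 0) => ? ? [? ?] [? ?] [? ?] /=; ring.
Qed.

Lemma norm2_sub_le k (x y : 'cV[C]_k) : norm2 (x - y) <= 2 * norm2 x + 2 * norm2 y.
Proof.
by have := qform_parallelogram 1%:M x y; have := norm2_ge0 (x + y); rewrite /norm2; lra.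
Qed.

Lemma qform_add_ker k (M : 'M[C]_k) u g :
  adj M = M -> M *m g = 0 -> qform M (u + g) = qform M u.
Proof.
move=> M_herm Mg0; have gM0 : adj g *m M = 0 by rewrite -M_herm -adj_mul Mg0 adj_mx0.
by rewrite /qform adj_add !mulmxDl !mulmxDr gM0 !mul0mx -(mulmxA _ M g) Mg0 mulmx0 !addr0.
Qed.

Lemma qform_posdef_gt0 k (M : 'M[C]_k) x : posdef M -> x != 0 -> 0 < qform M x.
Proof. by move=> [_ M_pos] /M_pos; rewrite ltcE => /andP[]. Qed.

Lemma qform_posdef_ge0 k (M : 'M[C]_k) x : posdef M -> 0 <= qform M x.
Proof.
move=> M_posdef; have [->|x_neq0] := eqVneq x 0; first by rewrite qform0.
exact/ltW/qform_posdef_gt0.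
Qed.

Lemma unitmx_add1 k (A : 'M[C]_k) : (forall x, 0 <= qform A x) -> A + 1%:M \in unitmx.
Proof.
move=> A_ge0; apply: unitmx_injective => x A1x0.
have Ax : A *m x = - x by apply/eqP; rewrite -subr_eq0 opprK -{2}[x]mul1mx -mulmxDl A1x0.
apply: norm2_eq0; have := A_ge0 x.
by rewrite /norm2 /qform mulmx1 -mulmxA Ax mulmxN mxE raddfN oppr_ge0.
Qed.

Lemma qform_sum k (I : Type) (r : seq I) (P : pred I) (M : I -> 'M[C]_k) x :
  qform (\sum_(i <- r | P i) M i) x = \sum_(i <- r | P i) qform (M i) x.
Proof.
elim/big_rec2: _ => [|i y N _ <-]; last by rewrite qformD.
by rewrite /qform mulmx0 mul0mx mxE.
Qed.

Lemma qform_delta_mx k (M : 'M[C]_k) i : qform M (delta_mx i 0) = complex.Re (M i i).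
Proof. by rewrite /qform adj_delta_mx -rowE -colE !mxE. Qed.

Lemma Re_mxtrace_congruence k p (M : 'M[C]_k) (A : 'M[C]_(k, p)) :
  complex.Re (\tr (adj A *m M *m A)) = \sum_i qform M (A *m delta_mx i 0).
Proof.
rewrite /mxtrace raddf_sum; apply: eq_bigr => i _.
by rewrite -qform_mulmx qform_delta_mx.
Qed.

Lemma qform_bounded_span k (M : nat -> 'M[C]_k) p (y : 'I_p -> 'cV[C]_k) (a : 'I_p -> C) :
  (forall N x, 0 <= qform (M N) x) ->
  (forall i, exists B, forall N, qform (M N) (y i) <= B) ->
  exists B, forall N, qform (M N) (\sum_i a i *: y i) <= B.
Proof.
move=> M_ge0; elim: p y a => [|p IH] y a y_bounded.
  by exists 0 => N; rewrite big_ord0 qform0.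
have [B1 sum_bounded] := IH (fun i => y (widen_ord (leqnSn p) i))
  (fun i => a (widen_ord (leqnSn p) i)) (fun i => y_bounded _).
have [B2 last_bounded] := y_bounded ord_max.
set r := complex.Re (a ord_max) ^+ 2 + complex.Im (a ord_max) ^+ 2.
have r_ge0 : 0 <= r by rewrite addr_ge0 ?sqr_ge0.
exists (2 * B1 + 2 * (r * B2)) => N; rewrite big_ord_recr /=.
set S := \sum_(i < p) _; set u := a ord_max *: y ord_max.
have := qform_parallelogram (M N) S u; have := M_ge0 N (S - u).
have := sum_bounded N; have := ler_wpM2l r_ge0 (last_bounded N).
rewrite /u qform_vecZ -/r; lra.
Qed.

End QuadraticForm.

Section Potential.
Variable R : realType.
Local Notation C := R[i].
Variables m1 m2 : nat.
Local Notation n := (m1 + m2)%N.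
Local Notation J := (jmat R m1 m2).

Lemma jmat_sqr : J *m J = 1%:M.
Proof.
rewrite /jmat mulmx_block !mulmx0 !mul0mx !addr0 !add0r mulmx1 mulNmx mulmxN mul1mx opprK.
by rewrite -scalar_mx_block.
Qed.

Lemma adj_jmat : adj J = J.
Proof. by rewrite /jmat adj_block_mx !adj_mx0 adj_opp !adj_mx1. Qed.

Lemma jmat_col_mx p (x : 'M[C]_(m1, p)) (y : 'M[C]_(m2, p)) :
  J *m col_mx x y = col_mx x (- y).
Proof. by rewrite /jmat mul_block_col !mul0mx !mul1mx addr0 add0r mulNmx mul1mx. Qed.

Lemma adj_col_jmat_col p q (x : 'M[C]_(m1, p)) (y : 'M[C]_(m2, p))
    (x' : 'M[C]_(m1, q)) (y' : 'M[C]_(m2, q)) :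
  adj (col_mx x y) *m J *m col_mx x' y' = adj x *m x' - adj y *m y'.
Proof. by rewrite -mulmxA jmat_col_mx adj_col_mx mul_row_col mulmxN. Qed.

Lemma qform_jmat (x : 'cV[C]_m1) (y : 'cV[C]_m2) :
  qform J (col_mx x y) = norm2 x - norm2 y.
Proof. by rewrite /qform adj_col_jmat_col /norm2 /qform !mulmx1 mxE [X in _ + X]mxE raddfB. Qed.

Lemma qform_col_mx0 (M : 'M[C]_n) (x : 'cV[C]_m1) :
  qform M (col_mx x 0) = qform (ulsubmx M) x.
Proof.
rewrite /qform -[M in LHS]submxK adj_col_mx adj_mx0 mul_row_block mul_row_col.
by rewrite !mul0mx !addr0 mulmx0 addr0.
Qed.

Lemma qform_col_0mx (M : 'M[C]_n) (y : 'cV[C]_m2) :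
  qform M (col_mx 0 y) = qform (drsubmx M) y.
Proof.
rewrite /qform -[M in LHS]submxK adj_col_mx adj_mx0 mul_row_block mul_row_col.
by rewrite !mul0mx !add0r mulmx0 add0r.
Qed.

Section PotentialBlocks.
Variable C0 : 'M[C]_n.
Hypothesis C0_posdef : posdef C0.
Hypothesis C0_jmat : C0 *m J *m C0 = J.

Local Notation a := (ulsubmx C0).
Local Notation b := (ursubmx C0).
Local Notation b' := (dlsubmx C0).
Local Notation d := (drsubmx C0).

Lemma potential_herm : adj C0 = C0.
Proof. by case: C0_posdef. Qed.

Lemma jmat_le_potential u : qform J u <= qform C0 u.
Proof.
pose Q := 1%:M - J *m C0.
have QC0Q : adj Q *m C0 *m Q = (2%:R : R)%:C *: C0 + (- 2%:R : R)%:C *: J.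
  rewrite /Q adj_sub adj_mx1 adj_mul adj_jmat potential_herm.
  have -> : (1%:M - C0 *m J) *m C0 = C0 - J by rewrite mulmxBl mul1mx C0_jmat.
  rewrite mulmxBr mulmx1 mulmxBl mulmxA C0_jmat mulmxA jmat_sqr mul1mx.
  rewrite rmorphN /= rmorph_nat scaleNr !scaler_nat.
  by apply/matrixP=> i j; rewrite !mxE; ring.
have := qform_posdef_ge0 (Q *m u) C0_posdef.
by rewrite -qform_mulmx QC0Q qformD !qformZ; lra.
Qed.

Lemma potential_blocks :
  [/\ a *m a - b *m b' = 1%:M, a *m b - b *m d = 0,
      b' *m a - d *m b' = 0 & b' *m b - d *m d = - 1%:M].
Proof.
have := C0_jmat; rewrite -{1 2}(submxK C0) /jmat mulmx_block.
rewrite !mulmx0 !addr0 !add0r !mulmx1 !mulmxN mulmx_block !mulNmx !mulmx1.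
by case/eq_block_mx=> -> -> -> ->.
Qed.

Lemma unitmx_ul_add1 : a + 1%:M \in unitmx.
Proof. by apply: unitmx_add1 => x; rewrite -qform_col_mx0 qform_posdef_ge0. Qed.

Lemma unitmx_dr_add1 : d + 1%:M \in unitmx.
Proof. by apply: unitmx_add1 => y; rewrite -qform_col_0mx qform_posdef_ge0. Qed.

(* The Weyl function of the constant potential C_k = C0. *)
Definition const_weyl : 'M[C]_(m1, m2) := - (invmx (a + 1%:M) *m b).

Let psi0 : 'M[C]_(m2, m1) := - (invmx (d + 1%:M) *m b').

Lemma invmx_ul_add1_swap : invmx (a + 1%:M) *m b = b *m invmx (d + 1%:M).
Proof.
have [_ ab_bd _ _] := potential_blocks.
have a1b : (a + 1%:M) *m b = b *m (d + 1%:M).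
  by apply/eqP; rewrite mulmxDl mulmxDr mul1mx mulmx1 -subr_eq0 opprD addrACA ab_bd subrr addr0.
by rewrite -[b *m _](mulKmx unitmx_ul_add1) [(a + 1%:M) *m _]mulmxA a1b mulmxK // unitmx_dr_add1.
Qed.

Lemma potential_ker_const_weyl : (C0 + J) *m col_mx const_weyl 1%:M = 0.
Proof.
have [_ _ _ b'b_dd] := potential_blocks.
rewrite mulmxDl jmat_col_mx -[C0 in C0 *m _]submxK mul_block_col !mulmx1 add_col_mx.
apply/eqP; rewrite col_mx_eq0; apply/andP; split; apply/eqP.
  rewrite addrAC -{2}[const_weyl]mul1mx -mulmxDl /const_weyl mulmxN.
  by rewrite mulKVmx ?unitmx_ul_add1 // addNr.
have d_sqr : d *m d - 1%:M = (d - 1%:M) *m (d + 1%:M).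
  by rewrite mulmxBl mulmxDr mulmx1 mul1mx opprD addrA addrK.
rewrite /const_weyl invmx_ul_add1_swap mulmxN mulmxA.
have -> : b' *m b = d *m d - 1%:M by rewrite -[b' *m b](subrK (d *m d)) b'b_dd addrC.
by rewrite d_sqr mulmxK ?unitmx_dr_add1 // opprB subrK subrr.
Qed.

Lemma potential_ker_psi0 : (C0 - J) *m col_mx 1%:M psi0 = 0.
Proof.
have [aa_bb' _ _ _] := potential_blocks.
rewrite mulmxBl jmat_col_mx -[C0 in C0 *m _]submxK mul_block_col !mulmx1 opp_col_mx add_col_mx.
apply/eqP; rewrite col_mx_eq0; apply/andP; split; apply/eqP; last first.
  rewrite opprK -addrA -{2}[psi0]mul1mx -mulmxDl /psi0 mulmxN.
  by rewrite mulKVmx ?unitmx_dr_add1 // subrr.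
have a_sqr : a *m a - 1%:M = (a + 1%:M) *m (a - 1%:M).
  by rewrite mulmxDl mulmxBr mulmx1 mul1mx addrA subrK.
rewrite /psi0 mulmxN mulmxA -invmx_ul_add1_swap -mulmxA.
have -> : b *m b' = a *m a - 1%:M by rewrite -aa_bb' opprB addrC subrK.
by rewrite a_sqr mulKmx ?unitmx_ul_add1 // opprB addrCA subrr addr0 subrr.
Qed.

Lemma psi0_adj : psi0 = adj const_weyl.
Proof.
pose G := col_mx const_weyl (1%:M : 'M[C]_m2).
pose H := col_mx (1%:M : 'M[C]_m1) psi0.
have C0G : C0 *m G = - (J *m G).
  by apply/eqP; rewrite -addr_eq0 -mulmxDl potential_ker_const_weyl.
have C0H : C0 *m H = J *m H by apply/eqP; rewrite -subr_eq0 -mulmxBl potential_ker_psi0.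
have GJH : adj G *m J *m H = adj const_weyl - psi0.
  by rewrite adj_col_jmat_col adj_mx1 mulmx1 mul1mx.
have GC0H : adj G *m C0 *m H = adj const_weyl - psi0 by rewrite -mulmxA C0H mulmxA GJH.
have : adj G *m C0 *m H = - (adj const_weyl - psi0).
  rewrite -potential_herm -adj_mul C0G (adj_opp (J *m G)) adj_mul adj_jmat mulNmx.
  by rewrite GJH.
rewrite GC0H => /eqP; rewrite -addr_eq0 -mulr2n -scaler_nat scalemx_eq0 pnatr_eq0 /=.
by rewrite subr_eq0 eq_sym => /eqP.
Qed.

Lemma potential_ker_adj_const_weyl : (C0 - J) *m col_mx 1%:M (adj const_weyl) = 0.
Proof. by rewrite -psi0_adj potential_ker_psi0. Qed.

Lemma unitmx_const_weyl : 1%:M - const_weyl *m adj const_weyl \in unitmx.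
Proof.
pose H := col_mx 1%:M (adj const_weyl).
have C0H : C0 *m H = J *m H.
  by apply/eqP; rewrite -subr_eq0 -mulmxBl potential_ker_adj_const_weyl.
have HC0H : adj H *m C0 *m H = 1%:M - const_weyl *m adj const_weyl.
  by rewrite -mulmxA C0H mulmxA adj_col_jmat_col adj_mx1 mul1mx adjK.
apply: unitmx_injective => x Kx0.
have Hx0 : H *m x = 0.
  apply/eqP; apply/negPn/negP => /(qform_posdef_gt0 C0_posdef).
  by rewrite -qform_mulmx HC0H /qform -mulmxA Kx0 mulmx0 mxE ltxx.
by have := congr1 usubmx Hx0; rewrite /H mul_col_mx col_mxKu mul1mx linear0.
Qed.

Lemma const_weyl_defect_le (w : 'cV[C]_n) (c : R) : 0 <= c <= 1 ->
  qform J w + c * qform C0 w <= 0 ->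
  2 * c * norm2 (usubmx w - const_weyl *m dsubmx w) <= (1 - c) * norm2 (dsubmx w).
Proof.
move=> /andP[c_ge0 c_le1] w_disc; set x := usubmx w - _.
have w_split : w = col_mx x 0 + col_mx const_weyl 1%:M *m dsubmx w.
  by rewrite mul_col_mx mul1mx add_col_mx add0r subrK vsubmxK.
have M_herm : adj (C0 + J) = C0 + J by rewrite adj_add potential_herm adj_jmat.
have M_ker : (C0 + J) *m (col_mx const_weyl 1%:M *m dsubmx w) = 0.
  by rewrite mulmxA potential_ker_const_weyl mul0mx.
have CJ_ge : 2 * norm2 x <= qform C0 w + qform J w.
  rewrite -qformD w_split qform_add_ker // qformD.
  have := jmat_le_potential (col_mx x 0); rewrite qform_jmat /norm2 qform0; lra.
have J_ge : - norm2 (dsubmx w) <= qform J w.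
  by rewrite -[w in qform J w]vsubmxK qform_jmat; have := norm2_ge0 (usubmx w); lra.
have c'_ge0 : 0 <= 1 - c by rewrite subr_ge0.
have := ler_wpM2l c_ge0 CJ_ge; have := ler_wpM2l c'_ge0 J_ge.
lra.
Qed.

End PotentialBlocks.

Lemma potential_eq_of_const_weyl (C0 C1 : 'M[C]_n) :
  posdef C0 -> C0 *m J *m C0 = J -> posdef C1 -> C1 *m J *m C1 = J ->
  const_weyl C0 = const_weyl C1 -> C0 = C1.
Proof.
move=> C0_posdef C0_jmat C1_posdef C1_jmat same_weyl; apply/eqP; rewrite -subr_eq0.
have G0 := potential_ker_const_weyl C0_posdef C0_jmat.
have G1 := potential_ker_const_weyl C1_posdef C1_jmat.
have H0 := potential_ker_adj_const_weyl C0_posdef C0_jmat.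
have H1 := potential_ker_adj_const_weyl C1_posdef C1_jmat.
rewrite -same_weyl in G1 H1.
have DG : (C0 - C1) *m col_mx (const_weyl C0) 1%:M = 0.
  by rewrite -(addrKA J) [J + C1]addrC mulmxBl G0 G1 subrr.
have DH : (C0 - C1) *m col_mx 1%:M (adj (const_weyl C0)) = 0.
  by rewrite -(addrKA (- J)) [- J + C1]addrC mulmxBl H0 H1 subrr.
rewrite -(hsubmxK (C0 - C1)) in DG DH *.
by apply/eqP; apply: row_mx_graphs_eq0 DG DH; exact: unitmx_const_weyl.
Qed.

Lemma const_weyl_diff_le (C0 C1 : 'M[C]_n) (w : 'cV[C]_n) (c : R) :
  posdef C0 -> C0 *m J *m C0 = J -> posdef C1 -> C1 *m J *m C1 = J -> 0 <= c <= 1 ->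
  qform J w + c * qform C0 w <= 0 -> qform J w + c * qform C1 w <= 0 ->
  c * norm2 ((const_weyl C0 - const_weyl C1) *m dsubmx w) <= 2 * (1 - c) * norm2 (dsubmx w).
Proof.
move=> C0_posdef C0_jmat C1_posdef C1_jmat c01 w_disc0 w_disc1.
have := const_weyl_defect_le C0_posdef C0_jmat c01 w_disc0.
have := const_weyl_defect_le C1_posdef C1_jmat c01 w_disc1.
move: c01 (usubmx w) (dsubmx w) (const_weyl C0) (const_weyl C1) => /andP[c_ge0 _] u e P0 P1.
have -> : (P0 - P1) *m e = (u - P1 *m e) - (u - P0 *m e).
  by rewrite mulmxBl; apply/esym; rewrite opprB addrC addrA subrK.
have := ler_wpM2l c_ge0 (norm2_sub_le (u - P1 *m e) (u - P0 *m e)).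
lra.
Qed.

End Potential.

Section Transfer.
Variable R : realType.
Local Notation C := R[i].
Variables m1 m2 : nat.
Local Notation n := (m1 + m2)%N.
Local Notation J := (jmat R m1 m2).

Definition transfer (C0 : 'M[C]_n) (z : C) : 'M[C]_n := 1%:M + ('i * z) *: (J *m C0).

Lemma fundWS (Cs : nat -> 'M[C]_n) z k :
  fundW Cs z k.+1 = transfer (Cs k) z *m fundW Cs z k.
Proof. by []. Qed.

Lemma fundW_shift (Cs : nat -> 'M[C]_n) z k :
  fundW Cs z k.+1 = fundW (fun k => Cs k.+1) z k *m transfer (Cs 0%N) z.
Proof.
elim: k => [|k IH]; first by rewrite fundWS mulmx1 mul1mx.
by rewrite fundWS IH mulmxA.
Qed.

Lemma adj_transfer_jmat (C0 : 'M[C]_n) z : adj C0 = C0 -> C0 *m J *m C0 = J ->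
  adj (transfer C0 z) *m J *m transfer C0 z =
  (1 + complex.Re z ^+ 2 + complex.Im z ^+ 2)%:C *: J + (- 2 * complex.Im z)%:C *: C0.
Proof.
move=> C0_herm C0_jmat.
have -> : (1 + complex.Re z ^+ 2 + complex.Im z ^+ 2)%:C = 1 + ('i * z)^* * ('i * z).
  by case: z => x y; apply: complex_ext => /=; ring.
have -> : (- 2 * complex.Im z)%:C = 'i * z + ('i * z)^*.
  by case: z => x y; apply: complex_ext => /=; ring.
rewrite /transfer adj_add adj_mx1 adj_scale adj_mul adj_jmat C0_herm.
set a := 'i * z; set b := a^*.
have -> : (1%:M + b *: (C0 *m J)) *m J = J + b *: C0.
  by rewrite mulmxDl mul1mx -scalemxAl -mulmxA jmat_sqr mulmx1.
rewrite mulmxDl !mulmxDr !mulmx1 -!scalemxAl -!scalemxAr mulmxA jmat_sqr mul1mx mulmxA C0_jmat.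
by rewrite !scalerDl scale1r scalerA [b *: C0 + _]addrC addrACA.
Qed.

Lemma transfer_unit (C0 : 'M[C]_n) z : C0 *m J *m C0 = J ->
  complex.Im z < 0 -> z != - 'i -> transfer C0 z \in unitmx.
Proof.
move=> C0_jmat Im_lt0 z_neq; set a := 'i * z.
have JC0_sqr : (J *m C0) *m (J *m C0) = 1%:M.
  by rewrite mulmxA -(mulmxA J C0 J) -(mulmxA J) C0_jmat jmat_sqr.
have left_inv : (1%:M - a *: (J *m C0)) *m transfer C0 z = (1 - a * a) *: 1%:M.
  rewrite /transfer -/a mulmxBl mul1mx mulmxDr mulmx1 -!scalemxAl -!scalemxAr JC0_sqr scalerA.
  by rewrite scalerBl scale1r opprD addrA addrK.
have aa_neq1 : 1 - a * a != 0.
  have -> : 1 - a * a = (z - 'i) * (z + 'i).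
    by case: z {Im_lt0 z_neq left_inv} @a => x y; apply: complex_ext => /=; ring.
  rewrite mulf_neq0 // ?addr_eq0 // opprK; apply/negP => /eqP z_i.
  by move: Im_lt0; rewrite z_i /=; lra.
apply: unitmx_injective => w Aw0.
have : (1 - a * a) *: w == 0 by rewrite -[w]mul1mx scalemxAl -left_inv -mulmxA Aw0 mulmx0.
by rewrite scalemx_eq0 (negbTE aa_neq1) => /eqP.
Qed.

End Transfer.

Section WeylDisc.
Variable R : realType.
Local Notation C := R[i].
Variables m1 m2 : nat.
Local Notation n := (m1 + m2)%N.
Local Notation J := (jmat R m1 m2).
Implicit Types (Cs : nat -> 'M[C]_n) (z : C) (w : 'cV[C]_n).

Definition qreal z : R := (1 + complex.Re z ^+ 2 + complex.Im z ^+ 2)^-1.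

Lemma qreal_gt0 z : 0 < qreal z.
Proof.
by rewrite invr_gt0; have := sqr_ge0 (complex.Re z); have := sqr_ge0 (complex.Im z); lra.
Qed.

Lemma qfunE z : qfun z = (qreal z)%:C.
Proof.
rewrite /qfun /qreal -add_Re2_Im2 fmorphV /= rmorphD /=; congr (_^-1).
by apply/eqP; rewrite eq_complex /= !addr0 addrA !eqxx.
Qed.

Definition gain z : R := - 2 * complex.Im z * qreal z.

Lemma gain_gt0 z : complex.Im z < 0 -> 0 < gain z.
Proof. by move=> Im_lt0; rewrite /gain mulr_gt0 ?qreal_gt0 //; lra. Qed.

Definition jterm Cs z w k : R := qreal z ^+ k * qform J (fundW Cs z k *m w).
Definition cterm Cs z w k : R := qreal z ^+ k * qform (Cs k) (fundW Cs z k *m w).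

Lemma jterm_rec Cs z w k : adj (Cs k) = Cs k -> Cs k *m J *m Cs k = J ->
  jterm Cs z w k.+1 = jterm Cs z w k + gain z * cterm Cs z w k.
Proof.
move=> Ck_herm Ck_jmat; rewrite /jterm /cterm /gain fundWS -mulmxA -qform_mulmx.
rewrite adj_transfer_jmat // qformD !qformZ exprS /qreal.
have s_neq0 : 1 + complex.Re z ^+ 2 + complex.Im z ^+ 2 != 0.
  by rewrite -invr_eq0 gt_eqF // qreal_gt0.
by field.
Qed.

Lemma jterm_le_cterm Cs z w k : posdef (Cs k) -> Cs k *m J *m Cs k = J ->
  jterm Cs z w k <= cterm Cs z w k.
Proof.
move=> Ck_posdef Ck_jmat; apply: ler_wpM2l; first by rewrite exprn_ge0 ?ltW ?qreal_gt0.
exact: jmat_le_potential.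
Qed.

Lemma cterm_ge0 Cs z w k : posdef (Cs k) -> 0 <= cterm Cs z w k.
Proof.
by move=> Ck_posdef; rewrite mulr_ge0 ?qform_posdef_ge0 // exprn_ge0 // ltW ?qreal_gt0.
Qed.

Lemma jterm_nonpos_of_bounded Cs z w : dirac_potential Cs -> complex.Im z < 0 ->
  (exists B, forall N, \sum_(k < N) cterm Cs z w k <= B) -> forall N, jterm Cs z w N <= 0.
Proof.
move=> Cs_pot Im_lt0 [B cterm_bounded].
apply: (bounded_growth_nonpos (gain_gt0 Im_lt0) _ _ cterm_bounded) => k;
  have [Ck_posdef Ck_jmat] := Cs_pot k.
- by apply: jterm_rec => //; case: Ck_posdef.
- exact: jterm_le_cterm.
Qed.

Definition weyl_sum Cs z N : 'M[C]_n :=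
  \sum_(k < N) (qreal z ^+ k)%:C *: (adj (fundW Cs z k) *m Cs k *m fundW Cs z k).

Lemma qform_weyl_sum Cs z w N : qform (weyl_sum Cs z N) w = \sum_(k < N) cterm Cs z w k.
Proof. by rewrite qform_sum; apply: eq_bigr => k _; rewrite qformZ qform_mulmx. Qed.

Lemma weyl_term_sum Cs (phi : 'M[C]_(m1, m2)) z N :
  \sum_(k < N) weyl_term Cs phi z k =
  adj (col_mx phi 1%:M) *m weyl_sum Cs z N *m col_mx phi 1%:M.
Proof.
rewrite mulmx_sumr mulmx_suml; apply: eq_bigr => k _.
by rewrite /weyl_term qfunE -rmorphXn -scalemxAr -scalemxAl !mulmxA.
Qed.

Definition weyl_disc Cs z (Phi : 'M[C]_(n, m2)) := forall v N, jterm Cs z (Phi *m v) N <= 0.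

Lemma weyl_function_disc Cs phi z : dirac_potential Cs -> is_weyl_function Cs phi ->
  complex.Im z < 0 -> weyl_disc Cs z (col_mx (phi z) 1%:M).
Proof.
move=> Cs_pot phi_weyl Im_lt0 v; apply: jterm_nonpos_of_bounded => //.
have [B tr_bounded] := phi_weyl z Im_lt0; set G := col_mx (phi z) 1%:M.
have S_ge0 N x : 0 <= qform (weyl_sum Cs z N) x.
  by rewrite qform_weyl_sum sumr_ge0 // => k _; apply: cterm_ge0; case: (Cs_pot k).
have basis_bounded i : exists B, forall N, qform (weyl_sum Cs z N) (G *m delta_mx i 0) <= B.
  exists B => N; have := tr_bounded N; rewrite weyl_term_sum lecE => /andP[_] /=.
  rewrite Re_mxtrace_congruence (bigD1 i) //=; apply: le_trans.
  by rewrite lerDl sumr_ge0.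
have [B' span_bounded] := qform_bounded_span (fun i => v i 0) S_ge0 basis_bounded.
exists B' => N; rewrite -qform_weyl_sum.
have -> : G *m v = \sum_i v i 0 *: (G *m delta_mx i 0).
  rewrite {1}(matrix_sum_delta v) mulmx_sumr; apply: eq_bigr => i _.
  by rewrite big_ord1 -scalemxAr.
exact: span_bounded.
Qed.

End WeylDisc.

Lemma gain_neg_imag (R : realType) (s : R) : gain ((- s)*i) * (1 + s ^+ 2) = 2 * s.
Proof.
rewrite /gain /qreal /= expr0n addr0 sqrrN.
have : 1 + s ^+ 2 != 0 by rewrite gt_eqF // ltr_pwDl // sqr_ge0.
by move=> ?; field.
Qed.

Lemma le_sqr_of_gain_bound (R : realFieldType) (c d N E : R) : 0 < d -> 0 <= N ->
  c * (1 + (1 + d) ^+ 2) = 2 * (1 + d) -> c * N <= 2 * (1 - c) * E -> N <= d ^+ 2 * E.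
Proof.
move=> d_gt0 N_ge0 cK cN_le.
have K_gt0 : 0 < 1 + (1 + d) ^+ 2 by rewrite ltr_pwDl // sqr_ge0.
have := ler_wpM2r (ltW K_gt0) cN_le.
have := congr1 ( *%R N) cK; have := congr1 ( *%R E) cK.
have := mulr_ge0 (ltW d_gt0) N_ge0.
lra.
Qed.

Section Uniqueness.
Variable R : realType.
Local Notation C := R[i].
Variables m1 m2 : nat.
Local Notation n := (m1 + m2)%N.
Local Notation J := (jmat R m1 m2).
Implicit Types (Cs : nat -> 'M[C]_n) (z : C) (w : 'cV[C]_n).

Lemma jterm1E Cs z w : adj (Cs 0%N) = Cs 0%N -> Cs 0%N *m J *m Cs 0%N = J ->
  jterm Cs z w 1 = qform J w + gain z * qform (Cs 0%N) w.
Proof. by move=> C0_herm C0_jmat; rewrite jterm_rec // /jterm /cterm expr0 !mul1r mul1mx. Qed.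

Lemma jterm_shift Cs z w N :
  jterm Cs z w N.+1 = qreal z * jterm (fun k => Cs k.+1) z (transfer (Cs 0%N) z *m w) N.
Proof. by rewrite /jterm fundW_shift -mulmxA exprS mulrA. Qed.

Lemma weyl_disc_shift Cs z Phi : weyl_disc Cs z Phi ->
  weyl_disc (fun k => Cs k.+1) z (transfer (Cs 0%N) z *m Phi).
Proof.
by move=> Phi_disc v N; have := Phi_disc v N.+1; rewrite jterm_shift -mulmxA pmulr_rle0 ?qreal_gt0.
Qed.

Lemma dsubmx_transfer_unit Cs z Phi : Cs 0%N *m J *m Cs 0%N = J -> weyl_disc Cs z Phi ->
  complex.Im z < 0 -> z != - 'i -> dsubmx Phi \in unitmx ->
  dsubmx (transfer (Cs 0%N) z *m Phi) \in unitmx.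
Proof.
move=> C0_jmat Phi_disc Im_lt0 z_neq D_unit; set T := transfer (Cs 0%N) z.
apply: unitmx_injective => v TPv_d0.
have TPv : T *m (Phi *m v) = col_mx (usubmx (T *m Phi) *m v) 0.
  by rewrite mulmxA -{1}[T *m Phi]vsubmxK mul_col_mx TPv_d0.
have := Phi_disc v 1%N; rewrite /jterm fundWS mulmx1 expr1 -/T TPv qform_jmat /norm2 qform0.
rewrite subr0 pmulr_rle0 ?qreal_gt0 // => /norm2_eq0 TPv_u0.
have Pv0 : Phi *m v = 0.
  rewrite -(mulKmx (transfer_unit C0_jmat Im_lt0 z_neq) (Phi *m v)) -/T.
  by rewrite TPv TPv_u0 col_mx0 mulmx0.
by rewrite -(mulKmx D_unit v) mul_dsub_mx Pv0 linear0 mulmx0.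
Qed.

(* z = -i is excluded: transfer C0 (-i) = J (J + C0) is singular. *)
Definition common_weyl_disc Cs Cs' (Phi : C -> 'M[C]_(n, m2)) :=
  forall z, complex.Im z < 0 -> z != - 'i ->
  [/\ weyl_disc Cs z (Phi z), weyl_disc Cs' z (Phi z) & dsubmx (Phi z) \in unitmx].

Lemma common_weyl_disc_potential0 Cs Cs' Phi :
  dirac_potential Cs -> dirac_potential Cs' -> common_weyl_disc Cs Cs' Phi -> Cs 0%N = Cs' 0%N.
Proof.
move=> Cs_pot Cs'_pot common.
have [C0_posdef C0_jmat] := Cs_pot 0%N; have [C1_posdef C1_jmat] := Cs'_pot 0%N.
apply: (potential_eq_of_const_weyl C0_posdef C0_jmat C1_posdef C1_jmat).
suff diff0 (e : 'cV[C]_m2) : (const_weyl (Cs 0%N) - const_weyl (Cs' 0%N)) *m e = 0.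
  apply/eqP; rewrite -subr_eq0; apply/eqP/matrixP => i j.
  by have /matrixP/(_ i 0) := diff0 (delta_mx j 0); rewrite -colE !mxE.
apply: norm2_eq0; apply: (nonpos_of_le_sqr_small (norm2_ge0 e)) => d d_gt0.
(* On the imaginary axis gain z -> 1 as z -> -i, which makes the defect bound sharp. *)
pose z : C := (- (1 + d))*i.
have Im_lt0 : complex.Im z < 0 by rewrite /= oppr_lt0; lra.
have z_neq : z != - 'i by apply/negP => /eqP/(congr1 (@complex.Im R)) /=; lra.
have [disc0 disc1 D_unit] := common z Im_lt0 z_neq.
pose v := invmx (dsubmx (Phi z)) *m e.
have w_e : dsubmx (Phi z *m v) = e by rewrite -mul_dsub_mx mulKVmx.
have gain_K := gain_neg_imag (1 + d).
have K_gt0 : 0 < 1 + (1 + d) ^+ 2 by rewrite ltr_pwDl // sqr_ge0.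
have gain01 : 0 <= gain z <= 1.
  by rewrite ltW ?gain_gt0 //= -(ler_pM2r K_gt0) gain_K mul1r; have := sqr_ge0 d; lra.
have := const_weyl_diff_le (w := Phi z *m v) C0_posdef C0_jmat C1_posdef C1_jmat gain01.
rewrite -!jterm1E ?(potential_herm C0_posdef) ?(potential_herm C1_posdef) // w_e.
move/(_ (disc0 v 1%N) (disc1 v 1%N)).
exact: le_sqr_of_gain_bound (norm2_ge0 _) gain_K.
Qed.

Lemma common_weyl_disc_shift Cs Cs' Phi : Cs 0%N *m J *m Cs 0%N = J ->
  common_weyl_disc Cs Cs' Phi -> Cs 0%N = Cs' 0%N ->
  common_weyl_disc (fun k => Cs k.+1) (fun k => Cs' k.+1)
    (fun z => transfer (Cs 0%N) z *m Phi z).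
Proof.
move=> C0_jmat common C0_eq z Im_lt0 z_neq.
have [disc disc' D_unit] := common z Im_lt0 z_neq.
split; [exact: weyl_disc_shift | rewrite C0_eq; exact: weyl_disc_shift |].
exact: dsubmx_transfer_unit.
Qed.

Lemma common_weyl_disc_potential_eq k : forall Cs Cs' Phi,
  dirac_potential Cs -> dirac_potential Cs' -> common_weyl_disc Cs Cs' Phi -> Cs k = Cs' k.
Proof.
elim: k => [|k IH] Cs Cs' Phi Cs_pot Cs'_pot common.
  exact: common_weyl_disc_potential0 common.
apply: (IH (fun k => Cs k.+1) (fun k => Cs' k.+1) (fun z => transfer (Cs 0%N) z *m Phi z))
  => [j | j |].
- exact: Cs_pot.
- exact: Cs'_pot.
- apply: common_weyl_disc_shift common (common_weyl_disc_potential0 Cs_pot Cs'_pot common).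
  by have [] := Cs_pot 0%N.
Qed.

End Uniqueness.

Theorem theorem2p3 (R : realType) (m1 m2 : nat) (hm1 : (0 < m1)%N) (hm2 : (0 < m2)%N)
  (Cs Cs' : nat -> 'M[R[i]]_(m1 + m2))
  (hC : dirac_potential Cs) (hC' : dirac_potential Cs')
  (phi : R[i] -> 'M[R[i]]_(m1, m2))
  (hphi : is_weyl_function Cs phi) (hphi' : is_weyl_function Cs' phi) :
  forall k : nat, Cs k = Cs' k.
Proof.
move=> k; apply: (common_weyl_disc_potential_eq k hC hC' (Phi := fun z => col_mx (phi z) 1%:M)).
move=> z Im_lt0 _; split; [exact: weyl_function_disc | exact: weyl_function_disc |].
by rewrite col_mxKd unitmx1.
Qed.
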